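(* Let $E$ be a topological space such that (i) $E$ has a countable basis of open sets, and (ii) for every closed subset $F$ of $E$, the intersection of countably many $\mathbf{\Pi}^0_2(E)$ subsets of $F$ each of which is dense in $F$ is dense in $F$. Then $\bigcup_{\alpha<\aleph_1}\mathbf{D}_\alpha(E)=\mathbf{\Delta}^0_2(E)$.
   Context: $\mathbf{\Sigma}^0_2(E)$: countable unions of sets $U\setminus V$ with $U,V$ open in $E$; $\mathbf{\Pi}^0_2(E)$: complements of $\mathbf{\Sigma}^0_2(E)$ sets; $\mathbf{\Delta}^0_2(E)=\mathbf{\Sigma}^0_2(E)\cap\mathbf{\Pi}^0_2(E)$. Parity of ordinals: every ordinal is uniquely $\lambda+n$ with $\lambda$ zero or limit and $n<\omega$; its parity is that of $n$; $\alpha\sim\beta$ means same parity. For an ordinal $\alpha$ and a sequence $(A_\beta)_{\beta<\alpha}$ of subsets of $E$, $D_\alpha((A_\beta)_{\beta<\alpha})=\bigcup_{\beta<\alpha,\ \beta\not\sim\alpha}\big(A_\beta\setminus\bigcup_{\gamma<\beta}A_\gamma\big)$. $\mathbf{D}_\alpha(E)$ is the class of all sets $D_\alpha((A_\beta)_{\beta<\alpha})$ with every $A_\beta$ open in $E$. $\aleph_1$ denotes the first uncountable ordinal. *)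

From Stdlib Require Import Classical.

Set Implicit Arguments.

Definition set (E : Type) := E -> Prop.

Record topology (E : Type) := Topology {
  is_open : set E -> Prop;
  open_full : is_open (fun _ => True);
  open_inter : forall U V, is_open U -> is_open V -> is_open (fun x => U x /\ V x);
  open_union : forall (F : set E -> Prop), (forall U, F U -> is_open U) ->
                 is_open (fun x => exists U, F U /\ U x)
}.

Section Topo.
Variables (E : Type) (T : topology E).

Definition is_closed (F : set E) : Prop := is_open T (fun x => ~ F x).

Definition second_countable : Prop :=
  exists B : nat -> set E,
    (forall n, is_open T (B n)) /\
    (forall U, is_open T U -> forall x, U x ->
       exists n, B n x /\ (forall y, B n y -> U y)).

Definition Sigma02 (A : set E) : Prop :=
  exists U V : nat -> set E,
    (forall n, is_open T (U n)) /\ (forall n, is_open T (V n)) /\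
    (forall x, A x <-> exists n, U n x /\ ~ V n x).

Definition Pi02 (A : set E) : Prop := Sigma02 (fun x => ~ A x).

Definition Delta02 (A : set E) : Prop := Sigma02 A /\ Pi02 A.

Definition dense_in (F A : set E) : Prop :=
  forall U, is_open T U -> (exists x, F x /\ U x) -> exists x, A x /\ U x.

Definition baire_closed_Pi02 : Prop :=
  forall F : set E, is_closed F ->
  forall A : nat -> set E,
    (forall n, Pi02 (A n)) ->
    (forall n x, A n x -> F x) ->
    (forall n, dense_in F (A n)) ->
    dense_in F (fun x => forall n, A n x).
End Topo.

(** A countable ordinal alpha is represented by an element
    a of a well-ordering R of nat: alpha is the order type of {b | R b a}, and
    the ordinals beta < alpha correspond to the elements b with R b a.
    Every countable ordinal arises this way (take an ordering of nat of
    type alpha + 1 + omega). *)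
Definition well_order (R : nat -> nat -> Prop) : Prop :=
  (forall x, ~ R x x) /\
  (forall x y z, R x y -> R y z -> R x z) /\
  (forall x y, R x y \/ x = y \/ R y x) /\
  well_founded R.

Definition imm_pred (R : nat -> nat -> Prop) (c b : nat) : Prop :=
  R c b /\ ~ (exists d, R c d /\ R d b).

(** parity R b p : p = true iff the ordinal of b, written lambda + n with
    lambda zero or limit, has n odd. *)
Inductive parity (R : nat -> nat -> Prop) : nat -> bool -> Prop :=
| parity_lim : forall b, (forall c, ~ imm_pred R c b) -> parity R b false
| parity_succ : forall b c p, imm_pred R c b -> parity R c p -> parity R b (negb p).

Definition same_parity (R : nat -> nat -> Prop) (b a : nat) : Prop :=
  exists p, parity R b p /\ parity R a p.

Definition Dalpha {E : Type} (R : nat -> nat -> Prop) (a : nat) (A : nat -> set E) : set E :=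
  fun x => exists b, R b a /\ ~ same_parity R b a /\ A b x /\
             (forall c, R c b -> ~ A c x).

Definition in_some_D {E : Type} (T : topology E) (X : set E) : Prop :=
  exists (R : nat -> nat -> Prop) (a : nat) (A : nat -> set E),
    well_order R /\
    (forall b, R b a -> is_open T (A b)) /\
    (forall x, X x <-> Dalpha R a A x).

(** A D_alpha set is Delta^0_2 because membership is decided by the first
    index beta with x in A_beta, and "beta is the first hit" is a difference
    of two open sets (Section DifferenceHierarchy).

    Conversely, for X Delta^0_2 we iterate the derivative
    D F = F /\ cl(F /\ X) /\ cl(F \ X) transfinitely, encoding the ordinal
    iterates as the "stages" of the smallest family closed under D and
    arbitrary intersections.  For any deflationary D the stages form a chain
    well-ordered by reverse inclusion (Section Tower).  By the Baire
    hypothesis a stage fixed by D is empty (Section Derivative), so every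
    point x leaves the tower at a stage F: x is in F but not in D F, and near x
    the set F lies either inside X or outside X.  Each such stage is coded by
    the least index of a basic open set through which the tower leaves it;
    the pairs (stage, bool) get codes in nat, well-ordered with the non-codes
    placed after them (Section CodesFirst), and the open pieces attached to
    these codes give X as a difference set whose first hit at x sits at the
    stage where x leaves the tower (Section Coding). *)

From Stdlib Require Import Classical FunctionalExtensionality PropExtensionality Lia Arith.
Set Implicit Arguments.

Section Opens.
Context {E : Type} {T : topology E}.

Lemma set_ext {U V : set E} : (forall x, U x <-> V x) -> U = V.
Proof.
  intros H; apply functional_extensionality; intro x.
  apply propositional_extensionality; auto.
Qed.

Lemma open_ext {U V : set E} : is_open T U -> (forall x, U x <-> V x) -> is_open T V.
Proof. intros HU H; rewrite <- (set_ext H); exact HU. Qed.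

Lemma open_Union {I : Type} (P : I -> Prop) (U : I -> set E) :
  (forall i, P i -> is_open T (U i)) -> is_open T (fun x => exists i, P i /\ U i x).
Proof.
  intros HU. eapply open_ext.
  - apply (open_union T (fun W => exists i, P i /\ W = U i)).
    intros W [i [Hi ->]]; auto.
  - intros x; split.
    + intros [W [[i [Hi ->]] Hx]]; eauto.
    + intros [i [Hi Hx]]. exists (U i); eauto.
Qed.

Lemma open_empty : is_open T (fun _ => False).
Proof.
  eapply open_ext; [apply (open_Union (fun _ : unit => False) (fun _ => fun _ => True)); tauto|].
  intros x; split; [intros [_ [[] _]] | intros []].
Qed.

Lemma open_if (P : Prop) (U : set E) : (P -> is_open T U) -> is_open T (fun x => P /\ U x).
Proof.
  intros HU. destruct (classic P) as [HP|HP].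
  - eapply open_ext; [exact (HU HP)|]. intros x; tauto.
  - eapply open_ext; [exact open_empty|]. intros x; tauto.
Qed.

Lemma open_or {U V : set E} : is_open T U -> is_open T V -> is_open T (fun x => U x \/ V x).
Proof.
  intros HU HV. eapply open_ext.
  - apply (open_Union (fun b : bool => True) (fun b => if b then U else V)).
    intros [|]; auto.
  - intros x; split.
    + intros [[|] [_ Hx]]; auto.
    + intros [Hx|Hx]; [exists true | exists false]; auto.
Qed.

Lemma closed_Inter (I : Type) (P : I -> Prop) (F : I -> set E) :
  (forall i, P i -> is_closed T (F i)) -> is_closed T (fun x => forall i, P i -> F i x).
Proof.
  intros HF. eapply open_ext; [apply (open_Union P (fun i x => ~ F i x)); exact HF|].
  intros x; split.
  - intros [i [Hi Hx]] Hall; auto.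
  - intros Hn. apply NNPP; intro Hc; apply Hn; intros i Hi.
    apply NNPP; intro Hx; apply Hc; eauto.
Qed.

Lemma closed_and (F G : set E) :
  is_closed T F -> is_closed T G -> is_closed T (fun x => F x /\ G x).
Proof.
  intros HF HG. eapply open_ext; [apply (open_or HF HG)|]. intros x; tauto.
Qed.

Definition closure (S : set E) : set E :=
  fun x => forall U, is_open T U -> U x -> exists y, S y /\ U y.

Lemma closure_closed (S : set E) : is_closed T (closure S).
Proof.
  eapply open_ext;
    [apply (open_Union (fun U => is_open T U /\ forall y, S y -> ~ U y) (fun U => U)); tauto|].
  intros x; split.
  - intros [U [[HU HS] Hx]] Hc. destruct (Hc U HU Hx) as [y [Hy1 Hy2]]. eapply HS; eauto.
  - intros Hn. apply NNPP; intro Hc; apply Hn; intros U HU HUx.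
    apply NNPP; intro Hno; apply Hc. exists U; split; [split; [exact HU|] | exact HUx].
    intros y Sy Uy; apply Hno; eauto.
Qed.

Lemma dense_in_closure (F S : set E) :
  (forall x, F x -> closure S x) -> dense_in T F S.
Proof. intros H U HU [x [Fx Ux]]. exact (H x Fx U HU Ux). Qed.

Lemma Sigma02_ext {A A' : set E} : Sigma02 T A -> (forall x, A x <-> A' x) -> Sigma02 T A'.
Proof. intros HA H. rewrite <- (set_ext H). exact HA. Qed.

Lemma Sigma02_cons {U0 V0 A : set E} : is_open T U0 -> is_open T V0 -> Sigma02 T A ->
  Sigma02 T (fun x => (U0 x /\ ~ V0 x) \/ A x).
Proof.
  intros HU0 HV0 [U [V [HU [HV H]]]].
  exists (fun n => match n with 0 => U0 | S k => U k end),
         (fun n => match n with 0 => V0 | S k => V k end).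
  split; [intros [|n]; auto|]. split; [intros [|n]; auto|].
  intros x; split.
  - intros [Hx|Hx]; [exists 0; auto|]. apply H in Hx. destruct Hx as [n Hn]. exists (S n); auto.
  - intros [[|n] Hn]; [left; tauto|]. right; apply H; eauto.
Qed.

Lemma Pi02_inter_closed (F S : set E) : is_closed T F -> Pi02 T S ->
  Pi02 T (fun x => F x /\ S x).
Proof.
  intros HF HS. eapply Sigma02_ext; [apply (Sigma02_cons HF open_empty HS)|].
  intros x; split; [tauto|]. intros Hx. destruct (classic (F x)); tauto.
Qed.
End Opens.

Arguments closure {E} T S.

Lemma wf_min {A : Type} {R : A -> A -> Prop} {P : A -> Prop} : well_founded R ->
  (exists x, P x) -> exists x, P x /\ forall y, R y x -> ~ P y.
Proof.
  intros Hwf [x Hx]. revert Hx. induction (Hwf x) as [x _ IH]. intros Hx.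
  destruct (classic (exists y, R y x /\ P y)) as [[y [Hy Py]]|Hn].
  - exact (IH y Hy Py).
  - exists x; split; auto. intros y Hy Py; apply Hn; eauto.
Qed.

Section WellOrders.
Variable (R : nat -> nat -> Prop).
Hypothesis HW : well_order R.

Lemma min_unique (P : nat -> Prop) {b b'} :
  P b -> (forall c, R c b -> ~ P c) -> P b' -> (forall c, R c b' -> ~ P c) -> b = b'.
Proof.
  destruct HW as [_ [_ [Htot _]]]. intros H1 H2 H3 H4.
  destruct (Htot b b') as [H|[H|H]]; auto.
  - exfalso; eapply H4; eauto.
  - exfalso; eapply H2; eauto.
Qed.

Lemma imm_pred_unique c c' b : imm_pred R c b -> imm_pred R c' b -> c = c'.
Proof.
  destruct HW as [_ [_ [Htot _]]]. intros [H1 H1'] [H2 H2'].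
  destruct (Htot c c') as [H|[H|H]]; auto.
  - exfalso; apply H1'; eauto.
  - exfalso; apply H2'; eauto.
Qed.

Lemma parity_unique b p q : parity R b p -> parity R b q -> p = q.
Proof.
  intros H1. revert q. induction H1 as [b Hl | b c p Hc Hp IH]; intros q H2.
  - inversion H2 as [|b' c' q' Hc']; subst; auto. exfalso; eapply Hl; eauto.
  - inversion H2 as [b' Hl'|b' c' q' Hc' Hq']; subst.
    + exfalso; eapply Hl'; eauto.
    + rewrite (imm_pred_unique Hc Hc') in IH. rewrite (IH _ Hq'); auto.
Qed.

Lemma parity_total b : exists p, parity R b p.
Proof.
  destruct HW as [_ [_ [_ Hwf]]]. induction (Hwf b) as [b _ IH].
  destruct (classic (exists c, imm_pred R c b)) as [[c Hc]|Hn].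
  - destruct (IH c (proj1 Hc)) as [p Hp]. exists (negb p); econstructor; eauto.
  - exists false; apply parity_lim; intros c Hc; apply Hn; eauto.
Qed.

Lemma same_parity_iff b a p q : parity R b p -> parity R a q -> (same_parity R b a <-> p = q).
Proof.
  intros Hb Ha; split.
  - intros [r [Hr1 Hr2]]. rewrite (parity_unique Hb Hr1). exact (parity_unique Hr2 Ha).
  - intros ->. exists q; auto.
Qed.
End WellOrders.

Section CodesFirst.
Variables (P : nat -> Prop) (L : nat -> nat -> Prop).
Hypothesis L_codes : forall k l, L k l -> P k /\ P l.
Hypothesis L_irrefl : forall k, ~ L k k.
Hypothesis L_trans : forall k l m, L k l -> L l m -> L k m.
Hypothesis L_total : forall k l, P k -> P l -> L k l \/ k = l \/ L l k.
Hypothesis L_acc : forall k, P k -> Acc L k.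

Definition codes_first (k l : nat) : Prop :=
  L k l \/ (P k /\ ~ P l) \/ (~ P k /\ ~ P l /\ k < l).

Lemma codes_first_below_code c k : codes_first c k -> P k -> L c k.
Proof. intros [H|[[_ H]|[_ [H _]]]] Hk; tauto. Qed.

(** Below a code, codes_first is L; hence it is accessible from every code. *)
Lemma codes_first_acc_code k : P k -> Acc codes_first k.
Proof.
  intros Hk. induction (L_acc Hk) as [k _ IH].
  constructor. intros c Hc. pose proof (codes_first_below_code Hc Hk) as Hck.
  exact (IH c Hck (proj1 (L_codes Hck))).
Qed.

Lemma codes_first_wo : well_order codes_first.
Proof.
  split; [|split; [|split]].
  - intros k [H|[H|H]]; [exact (L_irrefl H)|tauto|lia].
  - intros k l m [Hkl|[[Hk Hl]|[Hk [Hl Hkl]]]] [Hlm|[[Hl' Hm]|[Hl' [Hm Hlm]]]].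
    + left; eauto.
    + right; left; split; [exact (proj1 (L_codes Hkl))|auto].
    + exfalso; exact (Hl' (proj2 (L_codes Hkl))).
    + exfalso; exact (Hl (proj1 (L_codes Hlm))).
    + contradiction.
    + right; left; auto.
    + exfalso; exact (Hl (proj1 (L_codes Hlm))).
    + contradiction.
    + right; right; repeat split; auto; lia.
  - intros k l. destruct (classic (P k)) as [Hk|Hk]; destruct (classic (P l)) as [Hl|Hl].
    + destruct (L_total Hk Hl) as [H|[H|H]]; [left; left | right; left | right; right; left]; auto.
    + left; right; left; auto.
    + right; right; right; left; auto.
    + destruct (Nat.lt_trichotomy k l) as [H|[H|H]];
        [left | right; left | right; right]; auto; right; right; auto.
  - intros l. induction l as [l IH] using (well_founded_induction lt_wf).
    destruct (classic (P l)) as [Hl|Hl]; [exact (codes_first_acc_code Hl)|].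
    constructor. intros c [Hc|[[Hc _]|[_ [_ Hc]]]].
    + exfalso; apply Hl, (L_codes Hc).
    + exact (codes_first_acc_code Hc).
    + auto.
Qed.

Lemma codes_first_zero : ~ P 0 -> forall k, codes_first k 0 <-> P k.
Proof.
  intros H0 k; split.
  - intros [H|[H|H]]; [exact (proj1 (L_codes H))|tauto|lia].
  - intros Hk; right; left; auto.
Qed.
End CodesFirst.

Section DifferenceHierarchy.
Context {E : Type} {T : topology E}.
Variables (R : nat -> nat -> Prop) (a : nat) (A : nat -> set E).
Hypothesis HW : well_order R.
Hypothesis HA : forall b, R b a -> is_open T (A b).

Definition first_hit (b : nat) (x : E) : Prop :=
  R b a /\ A b x /\ forall c, R c b -> ~ A c x.

(** The points whose first hit satisfies a given property form a Sigma^0_2 set: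
    the union over b of A_b minus the union of the earlier A_c. *)
Lemma Sigma02_first_hits (P : nat -> Prop) :
  Sigma02 T (fun x => exists b, P b /\ first_hit b x).
Proof.
  destruct HW as [_ [Htr _]].
  exists (fun b x => (R b a /\ P b) /\ A b x), (fun b x => exists c, (R c b /\ R c a) /\ A c x).
  split; [intros b; apply open_if; intros [Hb _]; auto|].
  split; [intros b; apply open_Union; intros c [_ Hc]; auto|].
  intros x; split.
  - intros [b [Pb [Hb [Hx Hmin]]]]. exists b; split; [tauto|].
    intros [c [[Hc _] Hcx]]; eapply Hmin; eauto.
  - intros [b [[[Hb Pb] Hx] Hn]]. exists b; repeat split; auto.
    intros c Hc Hcx; apply Hn; eauto.
Qed.

Lemma first_hit_exists x : (exists c, R c a /\ A c x) -> exists b, first_hit b x.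
Proof.
  destruct HW as [_ [Htr [_ Hwf]]]. intros Hx.
  destruct (wf_min Hwf Hx) as [b [[Hb Hbx] Hmin]].
  exists b; repeat split; auto. intros c Hc Hcx; apply (Hmin c Hc); split; eauto.
Qed.

Lemma first_hit_unique x b b' : first_hit b x -> first_hit b' x -> b = b'.
Proof. intros [_ [H1 H2]] [_ [H3 H4]]. exact (min_unique HW (fun c => A c x) H1 H2 H3 H4). Qed.

Lemma Dalpha_first_hit x :
  Dalpha R a A x <-> exists b, ~ same_parity R b a /\ first_hit b x.
Proof.
  split.
  - intros [b [H1 [H2 [H3 H4]]]]. exists b; repeat split; auto.
  - intros [b [H1 [H2 [H3 H4]]]]. exists b; repeat split; auto.
Qed.

Lemma not_Dalpha_first_hit x :
  ~ Dalpha R a A x <->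
  ~ (exists c, R c a /\ A c x) \/ exists b, same_parity R b a /\ first_hit b x.
Proof.
  rewrite Dalpha_first_hit. split.
  - intros Hn. destruct (classic (exists c, R c a /\ A c x)) as [Hx|Hx]; [|left; auto].
    right. destruct (first_hit_exists Hx) as [b Hb]. exists b; split; auto.
    apply NNPP; intro Hs; apply Hn; eauto.
  - intros [Hn|[b [Hs Hb]]] [b' [Hs' Hb']].
    + apply Hn. destruct Hb' as [H1 [H2 _]]; eauto.
    + rewrite (first_hit_unique Hb Hb') in Hs. contradiction.
Qed.

Lemma Dalpha_parity x k q p : first_hit k x -> parity R k q -> parity R a p ->
  (Dalpha R a A x <-> q <> p).
Proof.
  intros Hk Hq Hp. rewrite Dalpha_first_hit, <- (same_parity_iff HW Hq Hp). split.
  - intros [b [Hs Hb]]. rewrite (first_hit_unique Hb Hk) in Hs. exact Hs.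
  - intros Hs. eauto.
Qed.

Lemma Dalpha_Delta02 : Delta02 T (Dalpha R a A).
Proof.
  split.
  - eapply Sigma02_ext; [apply (Sigma02_first_hits (fun b => ~ same_parity R b a))|].
    intros x; rewrite Dalpha_first_hit; reflexivity.
  - unfold Pi02. eapply Sigma02_ext.
    + apply (Sigma02_cons (open_full T) (open_Union (fun c => R c a) A HA)
                          (Sigma02_first_hits (fun b => same_parity R b a))).
    + intros x; rewrite not_Dalpha_first_hit; tauto.
Qed.
End DifferenceHierarchy.

Section Tower.
Context {E : Type}.
Variable D : set E -> set E.
Hypothesis D_sub : forall F x, D F x -> F x.

Definition subset (F G : set E) : Prop := forall x, F x -> G x.
Definition psubset (F G : set E) : Prop := subset F G /\ ~ subset G F.

Lemma subset_antisym F G : subset F G -> subset G F -> F = G.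
Proof. intros H1 H2; apply set_ext; split; auto. Qed.

Inductive stage : set E -> Prop :=
| stage_D : forall F, stage F -> stage (D F)
| stage_Inter : forall Fam : set E -> Prop, (forall G, Fam G -> stage G) ->
    stage (fun x => forall G, Fam G -> G x).

(** The two invariants of the tower argument: c lies below D x for every
    stage x strictly above it, and every stage x is either above c or below
    D c.  The first gives the second by induction on x, and the second gives
    the first by induction on c. *)
Definition below_D_above (c : set E) : Prop :=
  forall x, stage x -> psubset c x -> subset c (D x).

Definition comparable (c x : set E) : Prop := subset c x \/ subset x (D c).

Lemma stage_comparable c : stage c -> below_D_above c -> forall x, stage x -> comparable c x.
Proof.
  intros Hc He x Hx. induction Hx as [F HF IH | Fam HFam IH].
  - destruct IH as [H|H].
    + destruct (classic (subset F c)) as [H'|H'].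
      * rewrite (subset_antisym H' H). right; intros y Hy; auto.
      * left. apply He; auto. split; auto.
    + right. intros y Hy. apply H, D_sub; auto.
  - destruct (classic (forall G, Fam G -> subset c G)) as [H|H].
    + left. intros y Hy G HG. apply H; auto.
    + right. apply not_all_ex_not in H. destruct H as [G HG].
      apply imply_to_and in HG. destruct HG as [HG HnG].
      destruct (IH G HG) as [H|H]; [contradiction|].
      intros y Hy. apply H, Hy; auto.
Qed.

Lemma stage_below_D_above c : stage c -> below_D_above c.
Proof.
  intros Hc. induction Hc as [F HF IH | Fam HFam IH].
  - intros x Hx [H1 H2]. destruct (stage_comparable HF IH Hx) as [H|H].
    + destruct (classic (subset x F)) as [H'|H'].
      * rewrite (subset_antisym H' H). intros y Hy; auto.
      * intros y Hy. apply (IH x Hx); [split; auto | apply D_sub; auto].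
    + exfalso. apply H2. intros y Hy; apply H; auto.
  - intros x Hx [H1 H2].
    destruct (classic (forall G, Fam G -> subset x (D G))) as [H|H].
    + exfalso; apply H2. intros y Hy G HG. apply D_sub, (H G HG); auto.
    + apply not_all_ex_not in H. destruct H as [G HG].
      apply imply_to_and in HG. destruct HG as [HG HnG].
      destruct (stage_comparable (HFam G HG) (IH G HG) Hx) as [H|H]; [|contradiction].
      destruct (classic (subset x G)) as [H'|H'].
      * rewrite <- (subset_antisym H H').
        destruct (stage_comparable (HFam G HG) (IH G HG) (stage_Inter Fam HFam)) as [H3|H3];
          auto.
        exfalso; apply H2. intros y Hy. apply H3, H', Hy.
      * intros y Hy. apply (IH G HG x Hx); [split; auto | apply Hy; auto].
Qed.

Lemma stage_chain F G : stage F -> stage G -> subset F G \/ subset G F.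
Proof.
  intros HF HG. destruct (stage_comparable HF (stage_below_D_above HF) HG) as [H|H]; auto.
  right; intros y Hy; apply D_sub, H; auto.
Qed.

Lemma stage_psubset_D F G : stage F -> stage G -> psubset F G -> subset F (D G).
Proof. intros HF HG HFG. exact (stage_below_D_above HF HG HFG). Qed.

Definition stage_gt (G F : set E) : Prop := stage G /\ psubset F G.

Lemma stage_acc F : stage F -> Acc stage_gt F.
Proof.
  induction 1 as [F HF IH | Fam HFam IH].
  - constructor. intros G [HG [H1 H2]].
    destruct (stage_comparable HF (stage_below_D_above HF) HG) as [H|H]; [|contradiction].
    destruct (classic (subset G F)) as [H'|H'].
    + rewrite (subset_antisym H' H). auto.
    + apply (Acc_inv IH). repeat split; auto.
  - constructor. intros G [HG [H1 H2]].
    destruct (classic (forall H, Fam H -> subset G H)) as [Ha|Ha].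
    + exfalso; apply H2. intros y Hy H HH. apply Ha; auto.
    + apply not_all_ex_not in Ha. destruct Ha as [H Ha].
      apply imply_to_and in Ha. destruct Ha as [HH HnH].
      destruct (stage_chain (HFam H HH) HG) as [Hs|Hs]; [|contradiction].
      apply (Acc_inv (IH H HH)). repeat split; auto.
Qed.

Lemma stage_eq_of_exits F G : stage F -> stage G ->
  (exists y, F y /\ ~ D G y) -> (exists z, G z /\ ~ D F z) -> F = G.
Proof.
  intros HF HG [y [Fy Gy]] [z [Gz Fz]]. destruct (stage_chain HF HG) as [H|H].
  - destruct (classic (subset G F)) as [H'|H']; [apply subset_antisym; auto|].
    exfalso. apply Gy, (stage_psubset_D HF HG); [split|]; auto.
  - destruct (classic (subset F G)) as [H'|H']; [apply subset_antisym; auto|].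
    exfalso. apply Fz, (stage_psubset_D HG HF); [split|]; auto.
Qed.

(** If every stage fixed by D is empty, each point leaves the tower: it lies
    in some stage F (the least one containing it) but not in D F. *)
Lemma stage_exit : (forall G, stage G -> subset G (D G) -> forall x, ~ G x) ->
  forall x, exists F, stage F /\ F x /\ ~ D F x.
Proof.
  intros Hfix x. set (Fx := fun y => forall G, (stage G /\ G x) -> G y).
  assert (HFs : stage Fx) by (apply stage_Inter; intros G [HG _]; auto).
  exists Fx; split; [exact HFs|]. split; [intros G [_ HG]; auto|].
  intros HD. apply (Hfix Fx HFs) with x; [|intros G [_ HG]; auto].
  intros y Hy. apply Hy. split; auto. apply stage_D; auto.
Qed.
End Tower.

Section Derivative.
Context {E : Type} {T : topology E}.
Variable X : set E.

Definition derive (F : set E) : set E :=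
  fun x => F x /\ closure T (fun y => F y /\ X y) x /\ closure T (fun y => F y /\ ~ X y) x.

Lemma derive_sub F x : derive F x -> F x.
Proof. intros [H _]; exact H. Qed.

Lemma derive_closed {F} : is_closed T F -> is_closed T (derive F).
Proof. intros HF. repeat apply closed_and; auto using closure_closed. Qed.

Lemma stage_closed F : stage derive F -> is_closed T F.
Proof.
  induction 1 as [F _ IH | Fam _ IH].
  - apply derive_closed; auto.
  - apply closed_Inter; auto.
Qed.

(** Baire argument: a closed set on which both X and its complement are dense
    is empty, since both traces are dense Pi^0_2 subsets of it. *)
Lemma closed_split_empty : baire_closed_Pi02 T -> Delta02 T X ->
  forall G, is_closed T G -> subset G (derive G) -> forall x, ~ G x.
Proof.
  intros Hb [HXs HXp] G HG Hfix x Gx.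
  set (A := fun n => match n with 0 => (fun y => G y /\ X y) | _ => (fun y => G y /\ ~ X y) end).
  assert (HXc : Pi02 T (fun y => ~ X y)).
  { eapply Sigma02_ext; [exact HXs|]. intros y; split; [tauto|apply NNPP]. }
  destruct (Hb G HG A) with (U := fun _ : E => True) as [y [Hy _]].
  - intros [|n]; apply Pi02_inter_closed; auto.
  - intros [|n] z Hz; apply Hz.
  - intros [|n]; apply dense_in_closure; intros z Hz; apply (Hfix z Hz).
  - apply open_full.
  - eauto.
  - destruct (Hy 0) as [_ H1]. destruct (Hy 1) as [_ H2]. auto.
Qed.
End Derivative.
Arguments derive {E} T X F.

Section Coding.
Context {E : Type} {T : topology E}.
Variables (X : set E) (B : nat -> set E).
Hypothesis B_open : forall n, is_open T (B n).
Hypothesis B_basis : forall U, is_open T U -> forall x, U x ->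
  exists n, B n x /\ (forall y, B n y -> U y).
Hypothesis fixed_stage_empty :
  forall G, stage (derive T X) G -> subset G (derive T X G) -> forall x, ~ G x.

Local Notation D := (derive T X).
Let D_sub : forall F x, D F x -> F x := @derive_sub E T X.

Definition exit_basis (n : nat) (F : set E) : Prop :=
  stage D F /\ (exists y, B n y /\ F y) /\ (forall y, B n y -> ~ D F y).

Definition code (n : nat) (F : set E) : Prop :=
  exit_basis n F /\ forall m, m < n -> ~ exit_basis m F.

(** k codes the pair (F, b): the two ordinals 2 beta and 2 beta + 1 attached
    to the beta-th stage F are coded by odd and even positive integers. *)
Definition codes (k : nat) (F : set E) (b : bool) : Prop :=
  exists n, code n F /\ k = S (2 * n + Nat.b2n b).

Definition is_code (k : nat) : Prop := exists F b, codes k F b.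

Lemma exit_basis_inj n F G : exit_basis n F -> exit_basis n G -> F = G.
Proof.
  intros [HF [[y [Hy1 Hy2]] H3]] [HG [[z [Hz1 Hz2]] H4]].
  apply (stage_eq_of_exits D_sub HF HG); eauto.
Qed.

Lemma code_unique n m F : code n F -> code m F -> n = m.
Proof.
  intros [H1 H2] [H3 H4]. destruct (Nat.lt_trichotomy n m) as [H|[H|H]]; auto.
  - exfalso; eapply H4; eauto.
  - exfalso; eapply H2; eauto.
Qed.

Lemma codes_unique k F b G c : codes k F b -> codes k G c -> F = G /\ b = c.
Proof.
  intros [n [Hn ->]] [m [Hm Hk]].
  assert (n = m /\ b = c) as [-> ->]
    by (destruct b, c; simpl in Hk; split; try reflexivity; lia).
  split; auto. exact (exit_basis_inj (proj1 Hn) (proj1 Hm)).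
Qed.

Lemma codes_inj k l F b : codes k F b -> codes l F b -> k = l.
Proof. intros [n [Hn ->]] [m [Hm ->]]. rewrite (code_unique Hn Hm). auto. Qed.

Lemma codes_stage k F b : codes k F b -> stage D F.
Proof. intros [n [[[H _] _] _]]; auto. Qed.

Lemma codes_nonzero F b : ~ codes 0 F b.
Proof. intros [n [_ H]]; discriminate. Qed.

Lemma codes_exist F b : stage D F -> (exists x, F x /\ ~ D F x) -> exists k, codes k F b.
Proof.
  intros HF [x [Hx1 Hx2]].
  destruct (B_basis _ (derive_closed X (stage_closed HF)) _ Hx2) as [n [Hn1 Hn2]].
  destruct (wf_min lt_wf (P := fun n => exit_basis n F)) as [m [Hm1 Hm2]].
  - exists n. repeat split; eauto.
  - exists (S (2 * m + Nat.b2n b)), m. split; [split|]; auto.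
Qed.

Lemma codes_switch k F b c : codes k F b -> exists k', codes k' F c.
Proof. intros [n [Hn _]]. exists (S (2 * n + Nat.b2n c)), n; auto. Qed.

Definition pair_lt (F : set E) (b : bool) (G : set E) (c : bool) : Prop :=
  psubset G F \/ (F = G /\ b = false /\ c = true).

Lemma psubset_irrefl (F : set E) : ~ psubset F F.
Proof. intros [_ H]; apply H; intros y; auto. Qed.

Lemma psubset_trans (F G H : set E) : psubset F G -> psubset G H -> psubset F H.
Proof.
  intros [H1 H2] [H3 H4]. split; [intros y Hy; auto|].
  intros Hc; apply H4; intros y Hy; auto.
Qed.

Lemma pair_lt_irrefl F b : ~ pair_lt F b F b.
Proof. intros [H|[_ [H1 H2]]]; [exact (psubset_irrefl H)|congruence]. Qed.

Lemma pair_lt_trans F b G c H d : pair_lt F b G c -> pair_lt G c H d -> pair_lt F b H d.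
Proof.
  intros [H1|[-> [-> ->]]] [H2|[-> [H3 ->]]]; try (left; auto; fail).
  - left; eapply psubset_trans; eauto.
  - discriminate.
Qed.

Definition code_lt (k l : nat) : Prop :=
  exists F b G c, codes k F b /\ codes l G c /\ pair_lt F b G c.

Definition R : nat -> nat -> Prop := codes_first is_code code_lt.

Lemma code_lt_is_code k l : code_lt k l -> is_code k /\ is_code l.
Proof. intros [F [b [G [c [H1 [H2 _]]]]]]. split; eexists; eauto. Qed.

Lemma code_lt_inv k l G c : code_lt k l -> codes l G c ->
  exists F b, codes k F b /\ pair_lt F b G c.
Proof.
  intros [F [b [G' [c' [H1 [H2 H3]]]]]] Hl.
  destruct (codes_unique H2 Hl) as [<- <-]. eauto.
Qed.

(** Codes are totally ordered since stages form a chain. *)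
Lemma code_lt_total k l : is_code k -> is_code l -> code_lt k l \/ k = l \/ code_lt l k.
Proof.
  intros [F [b Hk]] [G [c Hl]].
  assert (Hsame : forall b c k l, codes k F b -> codes l F c ->
            code_lt k l \/ k = l \/ code_lt l k).
  { clear. intros b c k l Hk Hl. destruct b, c.
    - right; left; eapply codes_inj; eauto.
    - right; right; exists F, false, F, true; repeat split; auto; right; auto.
    - left; exists F, false, F, true; repeat split; auto; right; auto.
    - right; left; eapply codes_inj; eauto. }
  destruct (stage_chain D_sub (codes_stage Hk) (codes_stage Hl)) as [H|H].
  - destruct (classic (subset G F)) as [H'|H'].
    + rewrite (subset_antisym H' H) in Hl. eauto.
    + right; right; exists G, c, F, b; repeat split; auto; left; split; auto.
  - destruct (classic (subset F G)) as [H'|H'].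
    + rewrite (subset_antisym H H') in Hl. eauto.
    + left; exists F, b, G, c; repeat split; auto; left; split; auto.
Qed.

Lemma codes_acc F : Acc (stage_gt D) F -> forall k b, codes k F b -> Acc code_lt k.
Proof.
  induction 1 as [F _ IH].
  assert (Hf : forall k, codes k F false -> Acc code_lt k).
  { intros k Hk. constructor. intros y Hy.
    destruct (code_lt_inv Hy Hk) as [G [c [Hy' [Hp|[_ [_ Hc]]]]]]; [|discriminate].
    apply (IH G) with (b := c); [split; [eapply codes_stage; eauto|]|]; auto. }
  intros k [|] Hk; auto. constructor. intros y Hy.
  destruct (code_lt_inv Hy Hk) as [G [c [Hy' [Hp|[<- [-> _]]]]]]; auto.
  apply (IH G) with (b := c); [split; [eapply codes_stage; eauto|]|]; auto.
Qed.

Lemma R_wo : well_order R.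
Proof.
  apply codes_first_wo.
  - exact code_lt_is_code.
  - intros k [F [b [G [c [H1 [H2 H3]]]]]].
    destruct (codes_unique H1 H2) as [<- <-]. exact (pair_lt_irrefl H3).
  - intros k l m [F [b [G [c [H1 [H2 H3]]]]]] [G' [c' [H [d [H4 [H5 H6]]]]]].
    destruct (codes_unique H2 H4) as [<- <-].
    exists F, b, H, d; repeat split; auto. eapply pair_lt_trans; eauto.
  - exact code_lt_total.
  - intros k [F [b Hk]]. exact (codes_acc (stage_acc D_sub (codes_stage Hk)) Hk).
Qed.

(** The ordinal alpha of the theorem is the one of 0: its predecessors are the codes. *)
Lemma R_zero k : R k 0 <-> is_code k.
Proof.
  assert (H0 : ~ is_code 0) by (intros [F [b H0]]; exact (codes_nonzero H0)).
  exact (codes_first_zero _ _ code_lt_is_code H0 k).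
Qed.

Lemma R_codes k l F b G c : codes k F b -> codes l G c -> pair_lt F b G c -> R k l.
Proof. intros Hk Hl H. left. exists F, b, G, c; auto. Qed.

Lemma R_below_code c k F b : R c k -> codes k F b -> code_lt c k.
Proof. intros Hc Hk. apply (codes_first_below_code Hc). exists F, b; exact Hk. Qed.

(** The code of (F, b) has parity b: (F, true) is the successor of (F, false),
    and (F, false) is either a limit or the successor of some (G, true). *)
Lemma codes_parity F : Acc (stage_gt D) F -> forall k b, codes k F b -> parity R k b.
Proof.
  induction 1 as [F _ IH].
  assert (Hf : forall k, codes k F false -> parity R k false).
  { intros k Hk. destruct (classic (exists c, imm_pred R c k)) as [[c [Hck Hnone]]|Hn].
    - destruct (code_lt_inv (R_below_code Hck Hk) Hk) as [G [g [Hc [Hp|[_ [_ Hg]]]]]];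
        [|discriminate].
      destruct g.
      + apply (parity_succ (c := c) (p := true)); [split; auto|].
        apply (IH G); [split; [eapply codes_stage; eauto|]|]; auto.
      + exfalso. destruct (codes_switch true Hc) as [c' Hc']. apply Hnone. exists c'. split.
        * apply (R_codes Hc Hc'). right; auto.
        * apply (R_codes Hc' Hk). left; auto.
    - apply parity_lim; intros c Hc; apply Hn; eauto. }
  intros k [|] Hk; auto.
  destruct (codes_switch false Hk) as [k0 Hk0].
  apply (parity_succ (c := k0) (p := false)); auto. split.
  - apply (R_codes Hk0 Hk). right; auto.
  - intros [d [H1 H2]].
    destruct (code_lt_inv (R_below_code H2 Hk) Hk) as [G [g [Hd Hdk]]].
    destruct (code_lt_inv (R_below_code H1 Hd) Hd) as [F' [b' [Hk0' Hk0d]]].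
    destruct (codes_unique Hk0 Hk0') as [<- <-].
    destruct Hk0d as [H3|[E3 [_ H3]]]; destruct Hdk as [H4|[E4 [H5 _]]].
    + exact (psubset_irrefl (psubset_trans H4 H3)).
    + rewrite E4 in H3. exact (psubset_irrefl H3).
    + rewrite E3 in H4. exact (psubset_irrefl H4).
    + congruence.
Qed.

Definition locally (F S : set E) : set E :=
  fun x => exists n, B n x /\ (forall y, B n y -> ~ D F y) /\ (forall y, B n y -> F y -> S y).

Lemma locally_open F S : is_open T (locally F S).
Proof.
  eapply open_ext.
  - apply (open_Union (fun n => (forall y, B n y -> ~ D F y) /\ (forall y, B n y -> F y -> S y)) B).
    intros n _; apply B_open.
  - intros x; split; intros [n Hn]; exists n; tauto.
Qed.

Definition side (p : bool) : set E := if p then X else fun x => ~ X x.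

Lemma derive_side p F y : D F y <->
  F y /\ closure T (fun z => F z /\ side p z) y /\ closure T (fun z => F z /\ ~ side p z) y.
Proof.
  destruct p; simpl; [reflexivity|].
  assert (Hnn : (fun z => F z /\ ~ ~ X z) = (fun z => F z /\ X z)).
  { apply set_ext; intros z; split; [intros [? ?]; split; [|apply NNPP]|]; tauto. }
  rewrite Hnn. unfold derive; tauto.
Qed.

Lemma locally_side p F x : F x -> ~ D F x -> (locally F (side p) x <-> side p x).
Proof.
  intros Fx Dx. split; [intros [n [Hn [_ HS]]]; auto|]. intros Sx.
  assert (Hcl : ~ closure T (fun z => F z /\ ~ side p z) x).
  { intros Hcl. apply Dx, (derive_side p). repeat split; auto.
    intros U _ Ux; exists x; auto. }
  unfold closure in Hcl. apply not_all_ex_not in Hcl. destruct Hcl as [U Hcl].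
  apply imply_to_and in Hcl. destruct Hcl as [HU Hcl].
  apply imply_to_and in Hcl. destruct Hcl as [Ux Hcl].
  destruct (B_basis _ HU _ Ux) as [n [Hn HnU]].
  exists n; repeat split; auto.
  - intros y Hy Dy. apply (derive_side p) in Dy. destruct Dy as [_ [_ Hy3]].
    destruct (Hy3 (B n) (B_open n) Hy) as [z [Hz1 Hz2]]. apply Hcl; eauto.
  - intros y Hy Fy. apply NNPP; intro Hny. apply Hcl; eauto.
Qed.

Definition piece (p : bool) (F : set E) (b : bool) : set E :=
  if b then fun x => ~ D F x else fun x => ~ F x \/ locally F (side p) x.

Definition Aset (p : bool) (k : nat) : set E :=
  fun x => exists F b, codes k F b /\ piece p F b x.

Lemma Aset_iff p k F b x : codes k F b -> (Aset p k x <-> piece p F b x).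
Proof.
  intros Hk; split.
  - intros [G [c [Hk' H]]]. destruct (codes_unique Hk Hk') as [-> ->]; auto.
  - intros H; exists F, b; auto.
Qed.

Lemma piece_open p F b : stage D F -> is_open T (piece p F b).
Proof.
  intros HF. destruct b; simpl.
  - exact (derive_closed X (stage_closed HF)).
  - apply open_or; [exact (stage_closed HF)|apply locally_open].
Qed.

Lemma piece_below p k F x : codes k F false -> F x -> forall c, R c k -> ~ Aset p c x.
Proof.
  intros Hk Fx c Hc [G [g [Hcg HA]]].
  destruct (code_lt_inv (R_below_code Hc Hk) Hk) as [G' [g' [Hcg' [Hp|[_ [_ Hf]]]]]];
    [|discriminate].
  destruct (codes_unique Hcg Hcg') as [<- <-].
  assert (HD : D G x) by (apply (stage_psubset_D D_sub
                                  (codes_stage Hk) (codes_stage Hcg)); auto).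
  destruct g; simpl in HA; [auto|].
  destruct HA as [HA|[n [Hn [Hn2 _]]]]; [exact (HA (derive_sub HD))|exact (Hn2 x Hn HD)].
Qed.

Lemma first_hit_exit p x F : stage D F -> F x -> ~ D F x ->
  exists k, first_hit R 0 (Aset p) k x /\
    (side p x -> parity R k false) /\ (~ side p x -> parity R k true).
Proof.
  intros HF Fx Dx.
  destruct (codes_exist false HF (ex_intro _ x (conj Fx Dx))) as [k1 Hk1].
  destruct (codes_switch true Hk1) as [k2 Hk2].
  pose proof (codes_parity (stage_acc D_sub HF)) as Hpar.
  assert (Hk1x : Aset p k1 x <-> side p x).
  { rewrite (Aset_iff _ _ Hk1), <- (locally_side p Fx Dx). simpl; tauto. }
  destruct (classic (side p x)) as [Sx|Sx].
  - exists k1. split; [|split; [intros _; exact (Hpar _ _ Hk1)|contradiction]].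
    split; [apply R_zero; exists F, false; exact Hk1|].
    split; [apply Hk1x; exact Sx|exact (piece_below (p := p) Hk1 Fx)].
  - exists k2. split; [|split; [contradiction|intros _; exact (Hpar _ _ Hk2)]].
    split; [apply R_zero; exists F, true; exact Hk2|].
    split; [apply (Aset_iff _ _ Hk2); exact Dx|].
    intros c Hc.
    destruct (code_lt_inv (R_below_code Hc Hk2) Hk2) as [G [g [Hcg [Hp|[<- [-> _]]]]]].
    + apply (piece_below (p := p) Hk1 Fx). apply (R_codes Hcg Hk1). left; exact Hp.
    + rewrite (codes_inj Hcg Hk1), Hk1x. exact Sx.
Qed.

Lemma Delta02_in_some_D : in_some_D T X.
Proof.
  destruct (parity_total R_wo 0) as [p0 Hp0].
  exists R, 0, (Aset p0). split; [exact R_wo|split].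
  - intros k Hk. destruct (proj1 (R_zero k) Hk) as [F [b Hkb]].
    eapply open_ext; [apply (piece_open p0 b (codes_stage Hkb))|].
    intros x; symmetry; apply (Aset_iff _ _ Hkb).
  - intros x.
    destruct (stage_exit fixed_stage_empty x) as [F [HF [Fx Dx]]].
    destruct (first_hit_exit p0 HF Fx Dx) as [k [Hk [Hside Hnside]]].
    destruct p0, (classic (X x)) as [Xx|Xx]; simpl in Hside, Hnside.
    + rewrite (Dalpha_parity R_wo Hk (Hside Xx) Hp0). split; [discriminate|auto].
    + rewrite (Dalpha_parity R_wo Hk (Hnside Xx) Hp0). tauto.
    + rewrite (Dalpha_parity R_wo Hk (Hnside (fun H => H Xx)) Hp0). split; [discriminate|auto].
    + rewrite (Dalpha_parity R_wo Hk (Hside Xx) Hp0). tauto.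
Qed.
End Coding.

Theorem theorem3p15 (E : Type) (T : topology E) :
  second_countable T -> baire_closed_Pi02 T ->
  forall X : set E, in_some_D T X <-> Delta02 T X.
Proof.
  intros [B [B_open B_basis]] Hbaire X. split.
  - intros [R [a [A [HW [HA HX]]]]]. rewrite (set_ext HX). exact (Dalpha_Delta02 a A HW HA).
  - intros HX. apply (Delta02_in_some_D B B_open B_basis).
    intros G HG. exact (closed_split_empty Hbaire HX (stage_closed HG)).
Qed.
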